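(* Let $P\ge 1$, $U\ge 0$ and $L$ be integers with $L\leq -\frac{U+1}{2}$, and let $B_{\mathrm{OFL}}:=(1-2^{-P})\,2^{U+1}$. Then for every real $\nu\geq 0$ and every real $z$ with $0<z\leq B_{\mathrm{OFL}}$, the exponentially scaled function satisfies $\tilde K_\nu(z)\geq 2^{L}$ (i.e. $\tilde K_\nu(z)$ does not underflow the smallest positive normal floating-point number $2^L$). *)

From Stdlib Require Import Reals.
From Coquelicot Require Import Coquelicot.
Open Scope R_scope.

(* Modified Bessel function of the second kind, for real order nu and z > 0,
   via the standard integral representation (DLMF 10.32.9):
     K_nu(z) = \int_0^oo exp(-z cosh t) cosh(nu t) dt. *)
Definition BesselK (nu z : R) : R :=
  RInt_gen (fun t => exp (- z * cosh t) * cosh (nu * t))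
           (at_point 0) (Rbar_locally p_infty).

Definition BesselK_scaled (nu z : R) : R := exp z * BesselK nu z.

Definition B_OFL (P U : Z) : R :=
  (1 - powerRZ 2 (- P)) * powerRZ 2 (U + 1).

From Stdlib Require Import Reals Lra Lia Psatz.
From Coquelicot Require Import Coquelicot.
Import List.ListNotations.
Open Scope R_scope.

(* Write e^z K_nu(z) = \int_0^oo g_z(t) cosh(nu t) dt with
   g_z(t) = exp (-z (cosh t - 1)), a nonincreasing function of t >= 0.
   1. The improper integral exists (the integrand is nonnegative and dominated
      by C e^{-t}), so it bounds every partial integral \int_0^b from above.
   2. Since cosh(nu t) >= 1 and g_z is nonincreasing, every "right-endpoint"
      lower sum  sum_i (x_i - x_{i-1}) g_z(x_i)  over a grid 0 <= x_1 <= ...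
      is below e^z K_nu(z).
   3. For z = 4 an explicit grid of 16 points (logarithms of rationals
      a_i in [1, 3]) gives a lower sum >= 1/2; the certificate replaces
      exp(-w) by the polynomial (1 - w/16)^16 so that it is checked by lra.
   4. Dilation: cosh(s y) - 1 <= s^2 (cosh y - 1) for 0 <= s <= 1, so if
      z s^2 <= 4 the grid dilated by s gives e^z K_nu(z) >= s/2.
      Taking s = 1 for z <= 4 and s = 2/sqrt z for z > 4 yields
      e^z K_nu(z) >= min(1/2, 1/sqrt z) >= 2^L, using z <= 2^(U+1). *)

Lemma exp_le_exp x y : x <= y -> exp x <= exp y.
Proof. intros [H | ->]; [left; apply exp_increasing, H | lra]. Qed.

Lemma cosh_sub1 u : cosh u - 1 = 2 * sinh (u / 2) ^ 2.
Proof.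
  unfold cosh, sinh; rewrite !exp_Ropp.
  replace (exp u) with (exp (u / 2) * exp (u / 2))
    by (rewrite <- exp_plus; f_equal; lra).
  field; apply Rgt_not_eq, exp_pos.
Qed.

Lemma cosh_ge1 x : 1 <= cosh x.
Proof. assert (H := cosh_sub1 x); assert (H2 := pow2_ge_0 (sinh (x / 2))); lra. Qed.

Lemma sinh_le a b : a <= b -> sinh a <= sinh b.
Proof. intros [H | ->]; [left; apply sinh_lt, H | lra]. Qed.

Lemma sinh_nonneg v : 0 <= v -> 0 <= sinh v.
Proof. intros H; apply Rle_trans with (sinh 0); [rewrite sinh_0; lra | apply sinh_le, H]. Qed.

Lemma cosh_le a b : 0 <= a <= b -> cosh a <= cosh b.
Proof.
  intros Hab.
  assert (Ha := sinh_nonneg (a / 2) ltac:(lra)).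
  assert (Hs : sinh (a / 2) ^ 2 <= sinh (b / 2) ^ 2)
    by (apply pow_incr; split; [lra | apply sinh_le; lra]).
  assert (E1 := cosh_sub1 a); assert (E2 := cosh_sub1 b); lra.
Qed.

(* Subhomogeneity of sinh on [0, oo): its derivative cosh is nondecreasing. *)
Lemma sinh_scale s x : 0 <= s <= 1 -> 0 <= x -> sinh (s * x) <= s * sinh x.
Proof.
  intros Hs Hx.
  set (G := fun t => s * sinh t - sinh (s * t)).
  assert (HD : forall t, is_derive G t (s * cosh t - s * cosh (s * t))).
  { intros t; unfold G, sinh, cosh; auto_derive; [auto | field]. }
  destruct (MVT_gen G 0 x (fun t => s * cosh t - s * cosh (s * t))) as [c [Hc E]].
  - intros t _; apply HD.
  - intros t _; apply continuity_pt_filterlim.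
    apply (@ex_derive_continuous R_AbsRing R_NormedModule); eexists; apply HD.
  - rewrite Rmin_left, Rmax_right in Hc by lra.
    assert (cosh (s * c) <= cosh c) by (apply cosh_le; split; nra).
    unfold G in E; rewrite Rmult_0_r, sinh_0 in E.
    assert (0 <= s * (cosh c - cosh (s * c)) * (x - 0)) by (apply Rmult_le_pos; nra).
    lra.
Qed.

Lemma cosh_scale s y : 0 <= s <= 1 -> 0 <= y ->
  cosh (s * y) - 1 <= s ^ 2 * (cosh y - 1).
Proof.
  intros Hs Hy; rewrite !cosh_sub1.
  replace (s * y / 2) with (s * (y / 2)) by field.
  assert (H1 := sinh_scale s (y / 2) Hs ltac:(lra)).
  assert (H0 := sinh_nonneg (s * (y / 2)) ltac:(nra)).
  assert (sinh (s * (y / 2)) ^ 2 <= (s * sinh (y / 2)) ^ 2) by (apply pow_incr; lra).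
  nra.
Qed.

Lemma cosh_ge_sq t : 0 <= t -> t ^ 2 / 8 <= cosh t.
Proof.
  intros Ht; unfold cosh.
  assert (E : exp t = exp (t / 2) * exp (t / 2)) by (rewrite <- exp_plus; f_equal; lra).
  assert (H1 := exp_ineq1_le (t / 2)); assert (H2 := exp_pos (- t)); nra.
Qed.

Definition bessel_integrand (nu z t : R) : R := exp (- z * cosh t) * cosh (nu * t).

Lemma bessel_integrand_ex_RInt nu z a b : ex_RInt (bessel_integrand nu z) a b.
Proof.
  apply (@ex_RInt_continuous R_CompleteNormedModule); intros x _.
  apply (@ex_derive_continuous R_AbsRing R_NormedModule).
  unfold bessel_integrand, cosh; auto_derive; auto.
Qed.

Lemma bessel_integrand_nonneg nu z t : 0 <= bessel_integrand nu z t.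
Proof.
  unfold bessel_integrand.
  apply Rmult_le_pos; [left; apply exp_pos | assert (H := cosh_ge1 (nu * t)); lra].
Qed.

Lemma bessel_integrand_dominated nu z t : 0 <= nu -> 0 < z -> 0 <= t ->
  bessel_integrand nu z t <= exp (2 * (nu + 1) ^ 2 / z) * exp (- t).
Proof.
  intros Hn Hz Ht; unfold bessel_integrand; rewrite <- exp_plus.
  assert (Hc : cosh (nu * t) <= exp (nu * t)).
  { unfold cosh; assert (exp (- (nu * t)) <= exp (nu * t)) by (apply exp_le_exp; nra).
    lra. }
  apply Rle_trans with (exp (- z * cosh t) * exp (nu * t)).
  { apply Rmult_le_compat_l; [left; apply exp_pos | exact Hc]. }
  rewrite <- exp_plus; apply exp_le_exp.
  assert (Hch := cosh_ge_sq t Ht).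
  apply Rmult_le_reg_l with z; [exact Hz |].
  replace (z * (2 * (nu + 1) ^ 2 / z + - t)) with (2 * (nu + 1) ^ 2 - z * t) by (field; lra).
  assert (0 <= (z * t - 4 * (nu + 1)) ^ 2) by apply pow2_ge_0.
  nra.
Qed.

Lemma bessel_partial_bounded nu z b : 0 <= nu -> 0 < z -> 0 <= b ->
  RInt (bessel_integrand nu z) 0 b <= exp (2 * (nu + 1) ^ 2 / z).
Proof.
  intros Hn Hz Hb; set (C := exp (2 * (nu + 1) ^ 2 / z)).
  assert (HI : is_RInt (fun t => C * exp (- t)) 0 b (C - C * exp (- b))).
  { replace (C - C * exp (- b)) with (minus (- C * exp (- b)) (- C * exp (- 0)))
      by (unfold minus, plus, opp; simpl; rewrite Ropp_0, exp_0; ring).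
    apply (@is_RInt_derive R_CompleteNormedModule (fun t => - C * exp (- t))).
    - intros x _; auto_derive; [auto | ring].
    - intros x _; apply (@ex_derive_continuous R_AbsRing R_NormedModule); auto_derive; auto. }
  apply Rle_trans with (C - C * exp (- b)).
  - rewrite <- (is_RInt_unique _ _ _ _ HI).
    apply RInt_le; [exact Hb | apply bessel_integrand_ex_RInt | eexists; exact HI |].
    intros x Hx; apply bessel_integrand_dominated; lra.
  - assert (0 < exp (- b)) by apply exp_pos; assert (0 < C) by apply exp_pos; nra.
Qed.

Lemma improper_integral_nonneg_bounded (f : R -> R) (a M : R) :
  (forall u v, ex_RInt f u v) -> (forall t, a <= t -> 0 <= f t) ->
  (forall b, a <= b -> RInt f a b <= M) ->
  exists l, is_RInt_gen f (at_point a) (Rbar_locally p_infty) l /\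
            forall b, a <= b -> RInt f a b <= l.
Proof.
  intros Hex Hpos HM.
  assert (Hmono : forall b b', a <= b <= b' -> RInt f a b <= RInt f a b').
  { intros b b' Hb; rewrite <- (RInt_Chasles f a b b') by apply Hex.
    assert (0 <= RInt f b b') by (apply RInt_ge_0; [lra | apply Hex | intros; apply Hpos; lra]).
    change plus with Rplus; lra. }
  set (E := fun y => exists b, a <= b /\ y = RInt f a b).
  destruct (completeness E) as [l [Hub Hlub]].
  { exists M; intros y [b [Hb ->]]; apply HM, Hb. }
  { exists (RInt f a a), a; split; [lra | reflexivity]. }
  exists l; split.
  - intros Q [eps HQ].
    assert (Hnear : exists b0, a <= b0 /\ l - eps < RInt f a b0).
    { apply Classical_Prop.NNPP; intros Hno.
      assert (l <= l - eps).
      { apply Hlub; intros y [b [Hb ->]]; apply Rnot_lt_le; intros Hlt.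
        apply Hno; exists b; split; assumption. }
      destruct eps; simpl in *; lra. }
    destruct Hnear as [b0 [Hb0 Hlt]].
    exists (fun u => u = a) (fun b => b0 < b); [reflexivity | exists b0; auto |].
    intros u b -> Hb; exists (RInt f a b); split.
    + apply (@RInt_correct R_CompleteNormedModule), Hex.
    + apply HQ.
      assert (H1 := Hmono b0 b ltac:(lra)).
      assert (H2 : RInt f a b <= l) by (apply Hub; exists b; split; [lra | reflexivity]).
      change (Rabs (RInt f a b - l) < eps); apply Rabs_def1; lra.
  - intros b Hb; apply Hub; exists b; auto.
Qed.

Lemma BesselK_ge_partial nu z b : 0 <= nu -> 0 < z -> 0 <= b ->
  RInt (bessel_integrand nu z) 0 b <= BesselK nu z.
Proof.
  intros Hn Hz Hb.
  destruct (improper_integral_nonneg_bounded (bessel_integrand nu z) 0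
              (exp (2 * (nu + 1) ^ 2 / z))) as [l [Hl Hle]].
  - apply bessel_integrand_ex_RInt.
  - intros; apply bessel_integrand_nonneg.
  - intros b' Hb'; apply bessel_partial_bounded; assumption.
  - unfold BesselK; fold (bessel_integrand nu z).
    replace (RInt_gen _ _ _) with l; [apply Hle, Hb |].
    symmetry; apply (@is_RInt_gen_unique R_CompleteNormedModule); [typeclasses eauto.. | exact Hl].
Qed.

Fixpoint chain (p b : R) (l : list R) : Prop :=
  match l with
  | nil => p <= b
  | cons x l' => p <= x /\ chain x b l'
  end.

Fixpoint lower_sum (g : R -> R) (p : R) (l : list R) : R :=
  match l with
  | nil => 0
  | cons x l' => (x - p) * g x + lower_sum g x l'
  end.

Lemma chain_le p b l : chain p b l -> p <= b.
Proof. revert p; induction l as [|x l IH]; simpl; [auto | intros p [H1 H2]; specialize (IH x H2); lra]. Qed.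

Lemma chain_map (f : R -> R) (p0 : R) :
  (forall x y, p0 <= x <= y -> f x <= f y) ->
  forall l p b, p0 <= p -> chain p b l -> chain (f p) (f b) (List.map f l).
Proof.
  intros Hf; induction l as [|x l IH]; simpl; intros p b Hp Hc.
  - apply Hf; lra.
  - destruct Hc as [Hpx Hc]; split; [apply Hf; lra | apply IH; [lra | exact Hc]].
Qed.

Lemma lower_sum_le_RInt (f g : R -> R) (p0 : R) :
  (forall u v, ex_RInt f u v) -> (forall t, p0 <= t -> 0 <= f t) ->
  (forall x t, p0 <= t <= x -> g x <= f t) ->
  forall l p b, p0 <= p -> chain p b l -> lower_sum g p l <= RInt f p b.
Proof.
  intros Hex Hpos Hgf; induction l as [|x l IH]; simpl; intros p b Hp Hc.
  - apply RInt_ge_0; [exact Hc | apply Hex | intros t Ht; apply Hpos; lra].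
  - destruct Hc as [Hpx Hc].
    rewrite <- (RInt_Chasles f p x b) by apply Hex; change plus with Rplus.
    assert (Hstep : (x - p) * g x <= RInt f p x).
    { replace ((x - p) * g x) with (RInt (fun _ => g x) p x)
        by (rewrite RInt_const; simpl; unfold scal; simpl; unfold mult; simpl; ring).
      apply RInt_le; [exact Hpx | apply ex_RInt_const | apply Hex |].
      intros t Ht; apply Hgf; lra. }
    assert (Hrest := IH x b ltac:(lra) Hc); lra.
Qed.

Lemma lower_sum_scale (c : R) (g : R -> R) p l :
  lower_sum (fun t => c * g t) p l = c * lower_sum g p l.
Proof. revert p; induction l as [|x l IH]; intros p; simpl; [ring | rewrite IH; ring]. Qed.

Lemma lower_sum_le (g1 g2 : R -> R) (p0 : R) :
  (forall x, p0 <= x -> g1 x <= g2 x) ->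
  forall l p b, p0 <= p -> chain p b l -> lower_sum g1 p l <= lower_sum g2 p l.
Proof.
  intros H; induction l as [|x l IH]; simpl; intros p b Hp Hc; [lra |].
  destruct Hc as [Hpx Hc].
  assert (H1 := IH x b ltac:(lra) Hc); assert (H2 := H x ltac:(lra)); nra.
Qed.

Lemma lower_sum_dilate (s : R) (g : R -> R) l p :
  lower_sum g (s * p) (List.map (fun y => s * y) l) =
  s * lower_sum (fun y => g (s * y)) p l.
Proof. revert p; induction l as [|x l IH]; intros p; simpl; [ring | rewrite IH; ring]. Qed.

Definition scaled_integrand (z t : R) : R := exp (- z * (cosh t - 1)).

Lemma BesselK_scaled_ge_lower_sum nu z l b : 0 <= nu -> 0 < z -> chain 0 b l ->
  lower_sum (scaled_integrand z) 0 l <= BesselK_scaled nu z.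
Proof.
  intros Hn Hz Hc; unfold BesselK_scaled.
  apply Rle_trans with (lower_sum (fun t => exp z * exp (- z * cosh t)) 0 l).
  { apply (lower_sum_le _ _ 0) with b; [| lra | exact Hc].
    intros x _; unfold scaled_integrand; rewrite <- exp_plus; right; f_equal; ring. }
  rewrite lower_sum_scale; apply Rmult_le_compat_l; [left; apply exp_pos |].
  apply Rle_trans with (RInt (bessel_integrand nu z) 0 b).
  - apply (lower_sum_le_RInt _ _ 0); [apply bessel_integrand_ex_RInt
                                     | intros; apply bessel_integrand_nonneg | | lra | exact Hc].
    intros x t Ht; unfold bessel_integrand.
    assert (Hexp : exp (- z * cosh x) <= exp (- z * cosh t))
      by (apply exp_le_exp; assert (cosh t <= cosh x) by (apply cosh_le; lra); nra).
    assert (H1 := cosh_ge1 (nu * t)); assert (H2 := exp_pos (- z * cosh t)); nra.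
  - apply BesselK_ge_partial; [exact Hn | exact Hz | exact (chain_le _ _ _ Hc)].
Qed.

(* Polynomial lower bound for g_4(ln a) = exp(-2 (a - 1)^2 / a), from
   exp(-w) >= (1 - w/16)^16 for 0 <= w <= 16. *)
Definition g4_log_lb (a : R) : R := (1 - (2 * (a - 1) ^ 2 / a) / 16) ^ 16.

Lemma g4_log_lb_nonneg a : 0 <= g4_log_lb a.
Proof.
  unfold g4_log_lb; replace 16%nat with (2 * 8)%nat by reflexivity.
  rewrite pow_mult; apply pow_le, pow2_ge_0.
Qed.

Lemma g4_log_lb_le a : 1 <= a <= 3 -> g4_log_lb a <= scaled_integrand 4 (ln a).
Proof.
  intros Ha; set (w := 2 * (a - 1) ^ 2 / a).
  assert (Hw : 0 <= w <= 16).
  { unfold w; split; [apply Rdiv_le_0_compat; [apply Rmult_le_pos; [lra | apply pow2_ge_0] | lra] |].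
    apply Rmult_le_reg_r with a; [lra |].
    unfold Rdiv; rewrite Rmult_assoc, Rinv_l by lra; nra. }
  assert (E : Ropp 4 * (cosh (ln a) - 1) = INR 16 * (- w / 16)).
  { unfold cosh; rewrite exp_Ropp, exp_ln by lra; unfold w; simpl INR; field; lra. }
  unfold scaled_integrand; rewrite E.
  replace (exp (INR 16 * (- w / 16))) with (exp (- w / 16) ^ 16)
    by (rewrite <- Rpower_pow by apply exp_pos; unfold Rpower; rewrite ln_exp; reflexivity).
  unfold g4_log_lb; fold w; apply pow_incr.
  assert (H := exp_ineq1_le (- w / 16)); lra.
Qed.

(* The lower sum on the grid ln a_1 < ... < ln a_n, bounded below termwise
   using 1 - p/a <= ln a - ln p. *)
Fixpoint log_grid_lb (p : R) (l : list R) : R :=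
  match l with
  | nil => 0
  | cons a l' => (1 - p / a) * g4_log_lb a + log_grid_lb a l'
  end.

Lemma log_grid_lb_le l : forall p, 1 <= p -> chain p 3 l ->
  log_grid_lb p l <= lower_sum (scaled_integrand 4) (ln p) (List.map ln l).
Proof.
  induction l as [|a l IH]; simpl; intros p Hp Hc; [lra |].
  destruct Hc as [Hpa Hc]; assert (Ha3 := chain_le _ _ _ Hc).
  apply Rplus_le_compat; [| apply IH; [lra | exact Hc]].
  assert (Hlog : 1 - p / a <= ln a - ln p).
  { assert (H := exp_ineq1_le (ln (p / a))).
    rewrite exp_ln, ln_div in H by (try apply Rdiv_lt_0_compat; lra); lra. }
  assert (Hdiv : p / a <= 1)
    by (apply Rmult_le_reg_r with a; [lra | unfold Rdiv; rewrite Rmult_assoc, Rinv_l by lra; lra]).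
  apply Rmult_le_compat; [lra | apply g4_log_lb_nonneg | exact Hlog | apply g4_log_lb_le; lra].
Qed.

Definition grid : list R :=
  [53/50; 57/50; 61/50; 13/10; 69/50; 37/25; 79/50; 42/25;
   9/5; 48/25; 51/25; 109/50; 58/25; 62/25; 66/25; 141/50].

Lemma grid_chain : chain 1 3 grid.
Proof. unfold grid; simpl; repeat split; lra. Qed.

Lemma grid_certificate : 1 / 2 <= log_grid_lb 1 grid.
Proof. unfold log_grid_lb, grid, g4_log_lb; lra. Qed.

Lemma g4_lower_sum_ge_half :
  chain 0 (ln 3) (List.map ln grid) /\
  1 / 2 <= lower_sum (scaled_integrand 4) 0 (List.map ln grid).
Proof.
  rewrite <- ln_1; split.
  - apply (chain_map ln 1); [intros x y Hxy; apply ln_le; lra | lra | exact grid_chain].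
  - apply Rle_trans with (log_grid_lb 1 grid);
      [exact grid_certificate | apply log_grid_lb_le; [lra | exact grid_chain]].
Qed.

Lemma BesselK_scaled_ge_dilated nu z s : 0 <= nu -> 0 < z -> 0 < s <= 1 ->
  z * s ^ 2 <= 4 -> s / 2 <= BesselK_scaled nu z.
Proof.
  intros Hn Hz Hs Hzs.
  destruct g4_lower_sum_ge_half as [Hchain Hhalf].
  apply Rle_trans with (s * lower_sum (scaled_integrand 4) 0 (List.map ln grid)); [nra |].
  apply Rle_trans with
    (lower_sum (scaled_integrand z) (s * 0) (List.map (fun y => s * y) (List.map ln grid))).
  - rewrite lower_sum_dilate; apply Rmult_le_compat_l; [lra |].
    apply (lower_sum_le _ _ 0) with (ln 3); [| lra | exact Hchain].
    intros y Hy; unfold scaled_integrand; apply exp_le_exp.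
    assert (H1 := cosh_scale s y ltac:(lra) Hy); assert (H2 := cosh_ge1 y).
    assert (H3 := cosh_ge1 (s * y)); nra.
  - rewrite Rmult_0_r; apply BesselK_scaled_ge_lower_sum with (s * ln 3); [exact Hn | exact Hz |].
    rewrite <- (Rmult_0_r s); apply (chain_map (fun y => s * y) 0); [intros; nra | lra | exact Hchain].
Qed.

Lemma BesselK_scaled_ge_half nu z : 0 <= nu -> 0 < z -> z <= 4 ->
  1 / 2 <= BesselK_scaled nu z.
Proof. intros Hn Hz Hz4; apply (BesselK_scaled_ge_dilated nu z 1); lra. Qed.

Lemma BesselK_scaled_ge_inv_sqrt nu z : 0 <= nu -> 4 <= z ->
  / sqrt z <= BesselK_scaled nu z.
Proof.
  intros Hn Hz4.
  assert (Hsq := sqrt_sqrt z ltac:(lra)); assert (Hpos : 0 < sqrt z) by (apply sqrt_lt_R0; lra).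
  assert (H2 : 2 <= sqrt z) by (rewrite <- sqrt_square with 2 by lra; apply sqrt_le_1_alt; lra).
  replace (/ sqrt z) with ((2 / sqrt z) / 2) by (field; lra).
  apply BesselK_scaled_ge_dilated; [exact Hn | lra | split |].
  - apply Rdiv_lt_0_compat; lra.
  - apply Rmult_le_reg_r with (sqrt z); [lra | unfold Rdiv; rewrite Rmult_assoc, Rinv_l by lra; lra].
  - replace (z * (2 / sqrt z) ^ 2) with (4 * z / (sqrt z * sqrt z)) by (field; lra).
    rewrite Hsq; right; field; lra.
Qed.

Lemma B_OFL_le_pow2 P U : B_OFL P U <= powerRZ 2 (U + 1).
Proof.
  unfold B_OFL; assert (H1 := powerRZ_lt 2 (- P) ltac:(lra)).
  assert (H2 := powerRZ_lt 2 (U + 1) ltac:(lra)); nra.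
Qed.

Lemma pow2_neg_le_half L : IZR L < 0 -> powerRZ 2 L <= 1 / 2.
Proof.
  intros HL; assert (HL1 : (L <= -1)%Z) by (apply lt_IZR in HL; lia).
  rewrite powerRZ_Rpower by lra.
  apply Rle_trans with (Rpower 2 (- (1))); [apply Rle_Rpower; [lra | apply IZR_le in HL1; lra] |].
  rewrite Rpower_Ropp, Rpower_1 by lra; lra.
Qed.

Lemma pow2_le_inv_sqrt U L z : IZR L <= - (IZR U + 1) / 2 ->
  0 < z -> z <= powerRZ 2 (U + 1) -> powerRZ 2 L <= / sqrt z.
Proof.
  intros HL Hz HzU; rewrite powerRZ_Rpower by lra.
  apply Rle_trans with (Rpower 2 (- ((IZR U + 1) * / 2))); [apply Rle_Rpower; lra |].
  rewrite Rpower_Ropp, <- Rpower_mult, Rpower_sqrt by apply exp_pos.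
  rewrite <- plus_IZR, <- powerRZ_Rpower by lra.
  apply Rinv_le_contravar; [apply sqrt_lt_R0, Hz | apply sqrt_le_1_alt, HzU].
Qed.

Theorem proposition5 (P U L : Z) :
  (1 <= P)%Z -> (0 <= U)%Z -> IZR L <= - (IZR U + 1) / 2 ->
  forall nu z : R, 0 <= nu -> 0 < z -> z <= B_OFL P U ->
  powerRZ 2 L <= BesselK_scaled nu z.
Proof.
  intros _ HU HL nu z Hn Hz HzB.
  assert (HU0 : 0 <= IZR U) by (apply IZR_le, HU).
  destruct (Rle_lt_dec z 4) as [Hz4 | Hz4].
  - apply Rle_trans with (1 / 2); [apply pow2_neg_le_half; lra |].
    apply BesselK_scaled_ge_half; assumption.
  - apply Rle_trans with (/ sqrt z).
    + apply pow2_le_inv_sqrt with U; [exact HL | exact Hz |].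
      apply Rle_trans with (B_OFL P U); [exact HzB | apply B_OFL_le_pow2].
    + apply BesselK_scaled_ge_inv_sqrt; lra.
Qed.
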